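(* Suppose $\mu>0$ satisfies $\mu/2\le v_{\max}<\mu$, where $v_{\max}$ is the largest value $v_i(S)$ over all bidders $i$ and $S\in\mathcal S_i$. Then the multiplicative price update algorithm with $p_0=\frac{\mu}{4bm}$ and $r=(4bm)^{1/b}$, run on truthful input, outputs an allocation $S$ in which every good is allocated at most $b$ times, and $$v(S)\ge\frac{\mathrm{OPT}}{2(b(r-1)+1)}\ge \frac{\mathrm{OPT}}{O(b\, m^{1/b})}.$$
   Context: Multi-unit combinatorial auction: a set $\mathsf U$ of $m$ goods, each available in $b\ge1$ copies; $n$ bidders, bidder $i$ having a collection $\mathcal S_i$ of $k$ nonempty subsets of $\mathsf U$ and valuation $v_i:\mathcal S_i\to\mathbb R_{\ge0}$, extended to all $T\subseteq\mathsf U$ by $v_i(T)=\max\{v_i(S'):S'\in\mathcal S_i, S'\subseteq T\}$ ($0$ if none). $v(S)=\sum_i v_i(S_i)$ and $\mathrm{OPT}$ is the maximum of $\sum_i v_i(T_i)$ over allocations in which every good belongs to at most $b$ sets. Multiplicative price update algorithm (parameters $p_0,r$): set $p_e^1=p_0$ for all goods $e$; for $i=1,\dots,n$ in a fixed order: let $S_i$ be a set maximizing $v_i(S)$ among $S\in\mathcal S_i$ with $v_i(S)\ge\sum_{e\in S}p_e^i$ ($S_i=\emptyset$ if none); set $p_e^{i+1}=r\,p_e^i$ for $e\in S_i$, $p_e^{i+1}=p_e^i$ otherwise; output $(S_1,\dots,S_n)$. *)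

From Stdlib Require Import Reals.
From mathcomp Require Import all_boot.
Set Implicit Arguments. Unset Strict Implicit. Unset Printing Implicit Defensive.

Section Auction.
(* m goods ('I_m), n bidders ('I_n, processed in the order 0,1,...,n-1). *)
Variables (m n : nat).

(* An instance: each bidder i has a collection coll i of subsets of goods and a
   valuation v i (only its values on coll i matter). *)
Variable coll : 'I_n -> {set {set 'I_m}}.
Variable v : 'I_n -> {set 'I_m} -> R.

Definition vext (i : 'I_n) (T : {set 'I_m}) : R :=
  \big[Rmax/R0]_(S' in coll i | S' \subset T) v i S'.

Definition welfare (A : 'I_n -> {set 'I_m}) : R :=
  \big[Rplus/R0]_(i : 'I_n) vext i (A i).

Definition feasible (b : nat) (A : 'I_n -> {set 'I_m}) : Prop :=
  forall e : 'I_m, #|[set i : 'I_n | e \in A i]| <= b.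

(* OPT = maximum welfare over feasible allocations (finite max; 0 is attained
   by the empty allocation, and all values are >= 0). *)
Definition OPT (b : nat) : R :=
  \big[Rmax/R0]_(T : {ffun 'I_n -> {set 'I_m}} | [forall e : 'I_m,
      #|[set i : 'I_n | e \in T i]| <= b]) welfare T.

Definition vmax : R := \big[Rmax/R0]_(i : 'I_n) \big[Rmax/R0]_(S in coll i) v i S.

Definition at_nat (A : 'I_n -> {set 'I_m}) (j : nat) : {set 'I_m} :=
  if insub j is Some i then A i else set0.

(* price of good e seen by the bidder with (0-based) index i:
   p^1 = p0 ; p^{i+1}_e = r p^i_e if e in S_i, else p^i_e. *)
Fixpoint price (p0 r : R) (A : 'I_n -> {set 'I_m}) (i : nat) (e : 'I_m) : R :=
  match i with
  | 0 => p0
  | i'.+1 => if e \in at_nat A i' then Rmult r (price p0 r A i' e)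
             else price p0 r A i' e
  end.

Definition set_price (p0 r : R) (A : 'I_n -> {set 'I_m}) (i : nat) (S : {set 'I_m}) : R :=
  \big[Rplus/R0]_(e in S) price p0 r A i e.

(* A is an output of the multiplicative price update algorithm with parameters
   p0, r (with any tie-breaking among maximizing sets): for each bidder i, with
   the current prices, S_i is a set of maximum value among the affordable sets
   of S_i (v_i(S) >= sum of prices), or S_i is empty if there is none. *)
Definition mpu_output (p0 r : R) (A : 'I_n -> {set 'I_m}) : Prop :=
  forall i : 'I_n,
    let afford S := Rle (set_price p0 r A i S) (v i S) in
    (A i = set0 /\ (forall S, S \in coll i -> ~ afford S)) \/
    (A i \in coll i /\ afford (A i) /\
     (forall S, S \in coll i -> afford S -> Rle (v i S) (v i (A i)))).

End Auction.

(* The proof is a primal-dual argument on the final prices p = p^(n+1).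
   - Prices: the price of a good is p0 r^c after c sales, and serving bidder i
     raises the total price by (r - 1) times what bidder i paid, which is at most
     the value bidder i received; hence sum_e p_e <= m p0 + (r - 1) v(S).
   - Feasibility: once a good is sold b times it costs p0 r^b = mu > v_max, so no
     affordable set contains it again.
   - Weak duality: every set of bidder i is either worth at most v_i(S_i) or
     worth less than its final price, so v_i(T) <= v_i(S_i) + p(T); summing over a
     feasible allocation gives OPT <= v(S) + b sum_e p_e.
   - A bidder with a set of value >= mu/2 forces mu/4 <= (b(r - 1) + 1) v(S), and
     b m p0 = mu/4; together OPT <= 2 (b(r - 1) + 1) v(S).
   - Finally r = (4bm)^(1/b) <= 4 m^(1/b), giving the ratio 8 b m^(1/b). *)

From Pilot Require Import Defs.
From Stdlib Require Import Reals Lra.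
From mathcomp Require Import all_boot.
From HB Require Import structures.
Set Implicit Arguments. Unset Strict Implicit. Unset Printing Implicit Defensive.

(* Real addition as a commutative monoid, so that MathComp's generic bigop
   lemmas apply to the sums \big[Rplus/R0] used in the definitions. *)
HB.instance Definition _ := Monoid.isComLaw.Build R R0 Rplus
  (fun x y z => esym (Rplus_assoc x y z)) Rplus_comm Rplus_0_l.

Local Open Scope R_scope.

Section RealBigops.
Variable I : Type.
Implicit Types (s : seq I) (P : pred I) (F G : I -> R).

Lemma sumR_le s P F G :
  (forall i, P i -> F i <= G i) ->
  \big[Rplus/R0]_(i <- s | P i) F i <= \big[Rplus/R0]_(i <- s | P i) G i.
Proof. by move=> FG; apply: (big_ind2 Rle) => //; [lra | move=> *; lra]. Qed.

Lemma sumR_ge0 s P F :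
  (forall i, P i -> 0 <= F i) -> 0 <= \big[Rplus/R0]_(i <- s | P i) F i.
Proof. by move=> F0; apply: (big_ind (Rle 0)) => //; [lra | move=> *; lra]. Qed.

Lemma sumR_scale s P F c :
  \big[Rplus/R0]_(i <- s | P i) (c * F i) = c * \big[Rplus/R0]_(i <- s | P i) F i.
Proof.
by rewrite (big_morph (Rmult c) (id1 := 0) (op1 := Rplus)) //;
  [move=> x y; ring | ring].
Qed.

Lemma maxR_ge0 s P F : 0 <= \big[Rmax/R0]_(i <- s | P i) F i.
Proof.
apply: (big_rec (Rle 0)); first lra.
by move=> i x _ x0; apply: Rle_trans (Rmax_r _ _).
Qed.

Lemma maxR_le s P F y :
  0 <= y -> (forall i, P i -> F i <= y) -> \big[Rmax/R0]_(i <- s | P i) F i <= y.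
Proof. by move=> y0 Fy; apply: (big_ind (fun x => x <= y)) => // *; apply: Rmax_lub. Qed.

Lemma maxR_witness s P F y :
  0 < y -> y <= \big[Rmax/R0]_(i <- s | P i) F i -> exists i, P i /\ y <= F i.
Proof.
move=> y0; apply: (big_rec (fun x => y <= x -> exists i, P i /\ y <= F i)).
  lra.
by move=> i x Pi IH; rewrite /Rmax; case: Rle_dec => _ // le_y; exists i.
Qed.
End RealBigops.

Section FiniteSums.
Variable I : finType.

Lemma sumR_term (P : pred I) (F : I -> R) j :
  (forall i, 0 <= F i) -> P j -> F j <= \big[Rplus/R0]_(i | P i) F i.
Proof.
move=> F0 Pj; rewrite (bigD1 j) //=.
suff : 0 <= \big[Rplus/R0]_(i | P i && (i != j)) F i by lra.
by apply: sumR_ge0.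
Qed.

Lemma sumR_subset (P Q : pred I) (F : I -> R) :
  (forall i, 0 <= F i) -> (forall i, P i -> Q i) ->
  \big[Rplus/R0]_(i | P i) F i <= \big[Rplus/R0]_(i | Q i) F i.
Proof.
move=> F0 PQ; rewrite (big_mkcond P) (big_mkcond Q); apply: sumR_le => i _.
by case: ifP => [/PQ -> | _]; [lra | case: ifP => _; [exact: F0 | lra]].
Qed.

Lemma maxR_ge (P : pred I) (F : I -> R) j : P j -> F j <= \big[Rmax/R0]_(i | P i) F i.
Proof.
have : j \in index_enum I by exact: mem_index_enum.
elim: (index_enum I) => [|k s IH] //; rewrite in_cons big_cons => /orP [/eqP <- -> | js Pj].
  exact: Rmax_l.
have := IH js Pj; case: ifP => _ // le_j; exact: Rle_trans le_j (Rmax_r _ _).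
Qed.

Lemma sumR_const (P : pred I) c : \big[Rplus/R0]_(i | P i) c = INR #|P| * c.
Proof.
rewrite -sum1_card (big_morph INR (id1 := 0) (op1 := Rplus) plus_INR) //.
by rewrite Rmult_comm -sumR_scale; apply: eq_bigr => i _ /=; ring.
Qed.
End FiniteSums.

(* This is the step from a feasible allocation to the dual objective. *)
Lemma load_bound (m n b : nat) (T : 'I_n -> {set 'I_m}) (q : 'I_m -> R) :
  (forall e, 0 <= q e) -> (forall e, #|[set i | e \in T i]| <= b)%N ->
  \big[Rplus/R0]_(i : 'I_n) \big[Rplus/R0]_(e in T i) q e <=
  INR b * \big[Rplus/R0]_(e : 'I_m) q e.
Proof.
move=> q0 loadT.
under eq_bigr do rewrite big_mkcond.
rewrite exchange_big -sumR_scale; apply: sumR_le => e _.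
rewrite -big_mkcondr sumR_const Rmult_comm [X in _ <= X]Rmult_comm.
apply: Rmult_le_compat_l; first exact: q0.
by apply/le_INR/leP; move: (loadT e); rewrite cardsE.
Qed.

Section Prices.
Variables (m n : nat) (p0 r : R) (A : 'I_n -> {set 'I_m}).
Hypotheses (p0_gt0 : 0 < p0) (r_ge1 : 1 <= r).

Local Notation price := (price p0 r A).
Local Notation set_price := (set_price p0 r A).
Implicit Types (S T : {set 'I_m}) (e : 'I_m).

Definition times_sold (i : nat) (e : 'I_m) : nat := \sum_(j < i) (e \in at_nat A j).

Lemma price_times_sold i e : price i e = p0 * r ^ times_sold i e.
Proof.
elim: i => [|i IH]; first by rewrite /times_sold big_ord0 /=; ring.
rewrite /times_sold big_ord_recr -/(times_sold i e) /= IH.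
by case: (e \in at_nat A i); rewrite ?addn1 ?addn0 //=; ring.
Qed.

Lemma times_sold_mono i j e : (i <= j)%N -> (times_sold i e <= times_sold j e)%N.
Proof.
move=> le_ij; rewrite /times_sold -(subnKC le_ij) big_split_ord /=.
exact: leq_addr.
Qed.

Lemma times_sold_final e : times_sold n e = #|[set i | e \in A i]|.
Proof.
rewrite /times_sold cardsE -sum1_card [RHS]big_mkcond /=.
by apply: eq_bigr => i _; rewrite /at_nat valK unfold_in /=; case: (e \in A i).
Qed.

Lemma price_gt0 i e : 0 < price i e.
Proof. rewrite price_times_sold; apply: Rmult_lt_0_compat => //; apply: pow_lt; lra. Qed.

Lemma price_mono i j e : (i <= j)%N -> price i e <= price j e.
Proof.
move=> le_ij; rewrite !price_times_sold; apply: Rmult_le_compat_l; first lra.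
by apply: Rle_pow => //; apply/leP/times_sold_mono.
Qed.

Lemma set_price_ge0 i S : 0 <= set_price i S.
Proof. by apply: sumR_ge0 => e _; apply: Rlt_le; apply: price_gt0. Qed.

Lemma set_price_mono i j S : (i <= j)%N -> set_price i S <= set_price j S.
Proof. by move=> le_ij; apply: sumR_le => e _; apply: price_mono. Qed.

Lemma set_price_subset i S T : S \subset T -> set_price i S <= set_price i T.
Proof.
move/subsetP=> ST; apply: sumR_subset => [e|e /ST //].
exact/Rlt_le/price_gt0.
Qed.

Lemma price_le_set_price i e S : e \in S -> price i e <= set_price i S.
Proof. by move=> eS; apply: sumR_term => // f; apply/Rlt_le/price_gt0. Qed.

Definition total_price (i : nat) : R := \big[Rplus/R0]_(e : 'I_m) price i e.

Lemma total_price_step i :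
  total_price i.+1 = total_price i + (r - 1) * set_price i (at_nat A i).
Proof.
rewrite /total_price /set_price -sumR_scale [X in _ + X]big_mkcond -big_split /=.
by apply: eq_bigr => e _; case: (e \in at_nat A i); ring.
Qed.

Lemma total_price_init : total_price 0 = INR m * p0.
Proof. by rewrite /total_price /= sumR_const card_ord. Qed.
End Prices.

(* The arithmetic combining weak duality, the price potential and the
   high-value bidder; init stands for the initial total price m p0. *)
Lemma approximation_arith (b r mu init W P opt : R) :
  1 <= b -> 1 <= r -> 0 < mu -> 0 <= W -> 0 <= init -> b * init <= mu / 4 ->
  opt <= W + b * P -> P <= init + (r - 1) * W -> mu / 2 <= W \/ mu / 2 <= P ->
  opt <= 2 * (b * (r - 1) + 1) * W.
Proof.
move=> b_ge1 r_ge1 mu_gt0 W_ge0 init_ge0 budget weak potential high.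
have K_ge0 : 0 <= b * (r - 1) by apply: Rmult_le_pos; lra.
have bP : b * P <= mu / 4 + b * (r - 1) * W.
  by have := Rmult_le_compat_l b _ _ ltac:(lra) potential; lra.
suff : mu / 4 <= (b * (r - 1) + 1) * W by lra.
case: high => [W_high | P_high]; first by nra.
have : (r - 1) * W <= b * (r - 1) * W by apply: Rmult_le_compat_r; nra.
nra.
Qed.

Section Algorithm.
Variables (m n : nat) (coll : 'I_n -> {set {set 'I_m}}) (v : 'I_n -> {set 'I_m} -> R).
Variables (p0 r : R) (A : 'I_n -> {set 'I_m}).
Hypotheses (p0_gt0 : 0 < p0) (r_ge1 : 1 <= r) (A_output : mpu_output coll v p0 r A).

Local Notation price := (price p0 r A).
Local Notation set_price := (set_price p0 r A).
Local Notation total_price := (total_price p0 r A).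
Local Notation vext := (vext coll v).
Local Notation welfare := (welfare coll v).
Implicit Types (S T : {set 'I_m}) (e : 'I_m) (i : 'I_n).

Lemma vext_ge0 i T : 0 <= vext i T.
Proof. exact: maxR_ge0. Qed.

Lemma vext_ge i S T : S \in coll i -> S \subset T -> v i S <= vext i T.
Proof. by move=> S_coll ST; apply: maxR_ge; rewrite S_coll ST. Qed.

Lemma served_affordable i :
  A i != set0 -> A i \in coll i /\ set_price i (A i) <= v i (A i).
Proof. by case: (A_output i) => [[-> _] | [? [? _]]]; first rewrite eqxx. Qed.

Lemma alloc_affordable i : set_price i (A i) <= vext i (A i).
Proof.
have [A0 | /served_affordable [A_coll afford]] := eqVneq (A i) set0.
  by rewrite A0 /Defs.set_price big_set0; exact: vext_ge0.
exact: Rle_trans afford (vext_ge A_coll (subxx _)).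
Qed.

Lemma bidder_choice i S :
  S \in coll i -> v i S <= vext i (A i) \/ v i S < set_price n S.
Proof.
move=> S_coll; have late := set_price_mono A p0_gt0 r_ge1 S (ltnW (ltn_ord i)).
case: (A_output i) => [[_ none] | [A_coll [_ best]]].
  by right; have := none S S_coll; lra.
case: (Rle_dec (set_price i S) (v i S)) => [afford | ?]; last by right; lra.
by left; apply: Rle_trans (best S S_coll afford) (vext_ge A_coll (subxx _)).
Qed.

Lemma bidder_dual i T : vext i T <= vext i (A i) + set_price n T.
Proof.
have got_ge0 := vext_ge0 i (A i); have price_ge0 := set_price_ge0 A p0_gt0 r_ge1 n T.
apply: maxR_le => [|S /andP [S_coll ST]]; first lra.
have := set_price_subset A p0_gt0 r_ge1 n ST.
by case: (bidder_choice S_coll) => ?; lra.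
Qed.

(* If every value is below p0 r^b, no good is sold more than b times: once a
   good has been sold b times, every set containing it costs more than it is
   worth. *)
Lemma mpu_feasible b :
  (forall i S, S \in coll i -> v i S < p0 * r ^ b) -> feasible b A.
Proof.
move=> below e; rewrite -(times_sold_final A).
suff sold_le j : (times_sold A j e <= b)%N by [].
elim: j => [|j IH].
  by rewrite /times_sold big_ord0.
rewrite /times_sold big_ord_recr -/(times_sold A j e) /=.
case e_sold : (e \in at_nat A j); last by rewrite addn0.
move: e_sold; rewrite /at_nat; case: insubP => [i _ <- e_Ai | _]; last by rewrite in_set0.
have [A_coll afford] : A i \in coll i /\ set_price i (A i) <= v i (A i).
  by apply: served_affordable; apply/set0Pn; exists e.
have paid := price_le_set_price A p0_gt0 r_ge1 i e_Ai.
rewrite addn1 ltnNge; apply/negP => sold_out.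
have : p0 * r ^ b <= price i e.
  rewrite price_times_sold; apply: Rmult_le_compat_l; first lra.
  by apply: Rle_pow => //; apply/leP.
have := below i _ A_coll; lra.
Qed.

Definition obtained (j : nat) : R := oapp (fun i => vext i (A i)) 0 (insub j).

Lemma welfare_obtained : welfare A = \big[Rplus/R0]_(j < n) obtained j.
Proof. by apply: eq_bigr => i _; rewrite /obtained valK. Qed.

Lemma paid_le_obtained j : set_price j (at_nat A j) <= obtained j.
Proof.
rewrite /at_nat /obtained; case: insubP => [i _ <- | _] /=; first exact: alloc_affordable.
by rewrite /Defs.set_price big_set0; lra.
Qed.

Lemma total_price_bound : total_price n <= INR m * p0 + (r - 1) * welfare A.
Proof.
rewrite welfare_obtained.
suff bound j : total_price j <= INR m * p0 + (r - 1) * \big[Rplus/R0]_(k < j) obtained k.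
  exact: bound.
elim: j => [|j IH]; first by rewrite total_price_init big_ord0; lra.
rewrite total_price_step big_ord_recr /= Rmult_plus_distr_l -Rplus_assoc.
apply: Rplus_le_compat IH _; apply: Rmult_le_compat_l; first lra.
exact: paid_le_obtained.
Qed.

Lemma opt_dual_bound b : OPT coll v b <= welfare A + INR b * total_price n.
Proof.
have tp_ge0 : 0 <= total_price n.
  by apply: sumR_ge0 => e _; apply/Rlt_le/price_gt0.
have w_ge0 : 0 <= welfare A by apply: sumR_ge0 => i _; exact: vext_ge0.
apply: maxR_le => [|T /forallP T_feas]; first by have := pos_INR b; nra.
apply: Rle_trans (_ : welfare A + \big[Rplus/R0]_(i < n) set_price n (T i) <= _).
  by rewrite /Defs.welfare -big_split; apply: sumR_le => i _; exact: bidder_dual.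
apply: Rplus_le_compat_l; apply: load_bound => // e.
exact/Rlt_le/price_gt0.
Qed.

Lemma valuable_set_covered i S :
  S \in coll i -> v i S <= welfare A \/ v i S <= total_price n.
Proof.
move=> S_coll; case: (bidder_choice S_coll) => [le_got | lt_price]; [left | right].
  apply: Rle_trans le_got _; apply: (sumR_term (F := fun i => vext i (A i))) => // k.
  exact: vext_ge0.
apply: Rle_trans (Rlt_le _ _ lt_price) _; apply: sumR_subset => // e.
exact/Rlt_le/price_gt0.
Qed.

Theorem mpu_welfare_bound b mu :
  (1 <= b)%N -> 0 < mu -> INR b * (INR m * p0) <= mu / 4 ->
  (exists i S, S \in coll i /\ mu / 2 <= v i S) ->
  OPT coll v b <= 2 * (INR b * (r - 1) + 1) * welfare A.
Proof.
move=> b_ge1 mu_gt0 budget [i [S [S_coll high]]].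
apply: (approximation_arith (P := total_price n) (init := INR m * p0) (mu := mu)) => //.
- by apply: (le_INR 1); apply/leP.
- by apply: sumR_ge0 => k _; exact: vext_ge0.
- by apply: Rmult_le_pos; [exact: pos_INR | lra].
- exact: opt_dual_bound.
- exact: total_price_bound.
- by case: (valuable_set_covered S_coll) => ?; [left | right]; lra.
Qed.
End Algorithm.

(* 4k <= 4^k for k >= 1, i.e. (4k)^(1/k) <= 4. *)
Lemma four_mul_le_pow4 k : (1 <= k)%N -> 4 * INR k <= 4 ^ k.
Proof.
elim: k => [|[|k] IH] // _; first by rewrite /=; lra.
have := IH isT; have : 1 <= INR k.+1 by apply: (le_INR 1); apply/leP.
rewrite [INR k.+2]S_INR; change (4 ^ k.+2) with (4 * 4 ^ k.+1); lra.
Qed.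

Section ParameterChoice.
Variables (b m : nat) (mu : R).
Hypotheses (b_ge1 : (1 <= b)%N) (m_ge1 : (1 <= m)%N) (mu_gt0 : 0 < mu).

Let N := 4 * INR b * INR m.
Let p0 := mu / N.
Let r := Rpower N (/ INR b).

Let b_ge1R : 1 <= INR b. Proof. by apply: (le_INR 1); apply/leP. Qed.
Let m_ge1R : 1 <= INR m. Proof. by apply: (le_INR 1); apply/leP. Qed.
Let N_ge4 : 4 <= N. Proof. rewrite /N; nra. Qed.

Lemma init_price_gt0 : 0 < p0.
Proof. by apply: Rdiv_lt_0_compat; lra. Qed.

Lemma rate_ge1 : 1 <= r.
Proof.
rewrite /r -(Rpower_O N); last lra.
by apply: Rle_Rpower; [lra | apply/Rlt_le/Rinv_0_lt_compat; lra].
Qed.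

Lemma price_after_b_sales : p0 * r ^ b = mu.
Proof.
rewrite -Rpower_pow; last exact: exp_pos.
rewrite /r Rpower_mult Rinv_l ?Rpower_1 /p0; [field | | lra]; lra.
Qed.

Lemma initial_budget : INR b * (INR m * p0) = mu / 4.
Proof. by rewrite /p0 /N; field; lra. Qed.

(* r = (4b)^(1/b) m^(1/b) <= 4 m^(1/b), so the approximation ratio is
   O(b m^(1/b)). *)
Lemma ratio_bound : 2 * (INR b * (r - 1) + 1) <= 8 * INR b * Rpower (INR m) (/ INR b).
Proof.
have inv_b_ge0 : 0 <= / INR b by apply/Rlt_le/Rinv_0_lt_compat; lra.
have root_4b : Rpower (4 * INR b) (/ INR b) <= 4.
  have four : 4 = Rpower (Rpower 4 (INR b)) (/ INR b).
    by rewrite Rpower_mult Rinv_r ?Rpower_1; lra.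
  rewrite [X in _ <= X]four.
  apply: Rle_Rpower_l => //; split; first lra.
  by rewrite Rpower_pow; [exact: four_mul_le_pow4 | lra].
have r_split : r = Rpower (4 * INR b) (/ INR b) * Rpower (INR m) (/ INR b).
  by rewrite /r /N Rpower_mult_distr //; lra.
have root_m_gt0 : 0 < Rpower (INR m) (/ INR b) := exp_pos _.
have : r <= 4 * Rpower (INR m) (/ INR b).
  by rewrite r_split; apply: Rmult_le_compat_r; lra.
nra.
Qed.
End ParameterChoice.

Section LargestValue.
Variables (m n : nat) (coll : 'I_n -> {set {set 'I_m}}) (v : 'I_n -> {set 'I_m} -> R).

Lemma value_le_vmax i S : S \in coll i -> v i S <= vmax coll v.
Proof.
move=> S_coll; apply: Rle_trans (maxR_ge (v i) S_coll) _.
exact: (maxR_ge (fun j => \big[Rmax/R0]_(T in coll j) v j T)).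
Qed.

Lemma vmax_attained y :
  0 < y -> y <= vmax coll v -> exists i S, S \in coll i /\ y <= v i S.
Proof.
move=> y_gt0 /(maxR_witness y_gt0) [i [_ /(maxR_witness y_gt0) [S [S_coll le_y]]]].
by exists i, S.
Qed.
End LargestValue.

Local Close Scope R_scope.

Theorem theorem3 :
  exists C : R, Rlt 0 C /\
  forall (m n k b : nat) (coll : 'I_n -> {set {set 'I_m}})
         (v : 'I_n -> {set 'I_m} -> R) (mu : R),
    1 <= b ->
    (forall i : 'I_n, #|coll i| = k) ->
    (forall i : 'I_n, forall S, S \in coll i -> S != set0) ->
    (forall i : 'I_n, forall S, S \in coll i -> Rle 0 (v i S)) ->
    Rlt 0 mu ->
    Rle (Rdiv mu 2) (vmax coll v) -> Rlt (vmax coll v) mu ->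
    let p0 := Rdiv mu (Rmult (Rmult 4 (INR b)) (INR m)) in
    let r := Rpower (Rmult (Rmult 4 (INR b)) (INR m)) (Rinv (INR b)) in
    forall A : 'I_n -> {set 'I_m},
      mpu_output coll v p0 r A ->
      feasible b A /\
      Rle (Rdiv (OPT coll v b) (Rmult 2 (Rplus (Rmult (INR b) (Rminus r 1)) 1)))
          (welfare coll v A) /\
      Rle (Rdiv (OPT coll v b) (Rmult (Rmult C (INR b)) (Rpower (INR m) (Rinv (INR b)))))
          (Rdiv (OPT coll v b) (Rmult 2 (Rplus (Rmult (INR b) (Rminus r 1)) 1))).
Proof.
Local Open Scope R_scope.
exists 8; split; first lra.
move=> m n k b coll v mu b_ge1 _ coll_ne _ mu_gt0 vmax_lo vmax_hi p0 r A A_output.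
have high_bidder : exists i S, S \in coll i /\ mu / 2 <= v i S.
  by apply: vmax_attained vmax_lo; lra.
have m_ge1 : (1 <= m)%N.
  have [i [S [S_coll _]]] := high_bidder.
  by have /set0Pn [e _] := coll_ne i S S_coll; exact: leq_ltn_trans (leq0n e) (ltn_ord e).
have p0_gt0 : 0 < p0 := init_price_gt0 b_ge1 m_ge1 mu_gt0.
have r_ge1 : 1 <= r := rate_ge1 b_ge1 m_ge1.
have ratio_gt0 : 0 < 2 * (INR b * (r - 1) + 1).
  by have := Rmult_le_pos (INR b) (r - 1) (pos_INR b) ltac:(lra); lra.
split.
  apply: (mpu_feasible p0_gt0 r_ge1 A_output) => j T T_coll.
  by rewrite price_after_b_sales //; have := value_le_vmax v T_coll; lra.
have opt_le := mpu_welfare_bound p0_gt0 r_ge1 A_output b_ge1 mu_gt0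
  (Req_le _ _ (initial_budget mu b_ge1 m_ge1)) high_bidder.
split.
  apply: (Rmult_le_reg_l _ _ _ ratio_gt0); rewrite /Rdiv -Rmult_assoc Rinv_r_simpl_m; lra.
apply: Rmult_le_compat_l; first exact: maxR_ge0.
apply: Rinv_le_contravar ratio_gt0 _; exact: ratio_bound.
Qed.
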